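(* Let $a\neq 0$ be a real number and let $(P_n(x))_{n\ge0}$ be a sequence of polynomials such that $$\sum_{n\ge0}P_n(x)\frac{t^n}{n!}=f(t)e^{xt}$$ for some $f$ holomorphic at $0$ with $f(0)\neq0$, and such that $P_n(a-x)=(-1)^nP_n(x)$ for all $n\ge0$. Let $(a_k)_{k\in\mathbb{N}}$ be a sequence of real numbers such that the power series $F(t)=f(t)-\sum_{k\ge0}a_k\frac{t^k}{k!}$ (with $f$ replaced by its Taylor series at $0$) is odd or even. Then for every $n\ge0$: $$P_n(x)=\sum_{\substack{0\le k\le n\\ k\text{ even}}}a_k\binom{n}{k}a^{n-k}E_{n-k}\!\left(\frac{x}{a}\right)\quad\text{if }F\text{ is odd},$$ $$P_n(x)=-2\sum_{\substack{1\le k\le n+1\\ k\text{ odd}}}\frac{a_k}{k}\binom{n}{k-1}a^{n-k}B_{n-k+1}\!\left(\frac{x}{a}\right)\quad\text{if }F\text{ is even}.$$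
   Context: $B_n(x)$ and $E_n(x)$ denote the Bernoulli and Euler polynomials, defined by $\sum_{n\ge0}B_n(x)\frac{t^n}{n!}=\frac{te^{xt}}{e^t-1}$ and $\sum_{n\ge0}E_n(x)\frac{t^n}{n!}=\frac{2e^{xt}}{e^t+1}$. *)

From Stdlib Require Import Reals List Arith.
From Coquelicot Require Import Coquelicot.
Open Scope R_scope.

Definition csum_lt (n : nat) (F : nat -> Complex.C) : Complex.C :=
  fold_right Cplus (RtoC 0) (map F (seq 0 n)).

Fixpoint cpow (z : Complex.C) (n : nat) : Complex.C :=
  match n with O => RtoC 1 | S m => Cmult z (cpow z m) end.

Definition cexp (z : Complex.C) : Complex.C :=
  (exp (Re z) * cos (Im z), exp (Re z) * sin (Im z)).

Definition cbinom (n k : nat) : Complex.C := RtoC (Binomial.C n k).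
Definition cfact (n : nat) : Complex.C := RtoC (INR (fact n)).

Fixpoint upto (g : nat -> (nat -> Complex.C) -> Complex.C) (n : nat) : nat -> Complex.C :=
  match n with
  | O => fun _ => g O (fun _ => RtoC 0)
  | S m => let b := upto g m in
           fun k => if Nat.leb k m then b k else g (S m) b
  end.
Definition strong_rec (g : nat -> (nat -> Complex.C) -> Complex.C) (n : nat) : Complex.C :=
  upto g n n.

(* Bernoulli polynomials: t e^{xt}/(e^t-1) = sum_n B_n(x) t^n/n!.
   Comparing coefficients of t^{n+1}/(n+1)! in  t e^{xt} = (e^t - 1) sum B_n(x) t^n/n!
   gives (n+1) x^n = sum_{k=0}^n C(n+1,k) B_k(x), i.e.
   B_n(x) = x^n - 1/(n+1) sum_{k<n} C(n+1,k) B_k(x). *)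
Definition bernoulli_poly (n : nat) (x : Complex.C) : Complex.C :=
  strong_rec (fun m b =>
    Cminus (cpow x m)
      (Cmult (Cinv (RtoC (INR (S m))))
             (csum_lt m (fun k => Cmult (cbinom (S m) k) (b k))))) n.

(* Euler polynomials: 2 e^{xt}/(e^t+1) = sum_n E_n(x) t^n/n!.
   Comparing coefficients in 2 e^{xt} = (e^t + 1) sum E_n(x) t^n/n! gives
   2 x^n = E_n(x) + sum_{k=0}^n C(n,k) E_k(x), i.e.
   E_n(x) = x^n - 1/2 sum_{k<n} C(n,k) E_k(x). *)
Definition euler_poly (n : nat) (x : Complex.C) : Complex.C :=
  strong_rec (fun m b =>
    Cminus (cpow x m)
      (Cmult (Cinv (RtoC 2))
             (csum_lt m (fun k => Cmult (cbinom m k) (b k))))) n.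

Definition holomorphic_at0 (f : Complex.C -> Complex.C) : Prop :=
  exists r : R, 0 < r /\
    forall z : Complex.C, Cmod z < r ->
      exists l : Complex.C, @is_derive C_AbsRing C_NormedModule f z l.

Definition taylor_series_at0 (f : Complex.C -> Complex.C) (c : nat -> Complex.C) : Prop :=
  exists r : R, 0 < r /\
    forall t : Complex.C, Cmod t < r -> is_pseries c t (f t).

Definition is_poly_fun (p : Complex.C -> Complex.C) : Prop :=
  exists (d : nat) (q : nat -> Complex.C),
    forall x, p x = csum_lt d (fun k => Cmult (q k) (cpow x k)).

Definition ps_odd (s : nat -> Complex.C) : Prop :=
  forall k, Nat.even k = true -> s k = RtoC 0.
Definition ps_even (s : nat -> Complex.C) : Prop :=
  forall k, Nat.odd k = true -> s k = RtoC 0.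

From Stdlib Require Import Reals List Arith ZArith Lia Lra.
From Coquelicot Require Import Coquelicot.
Open Scope R_scope.

(* Write f(t) = sum_k c_k t^k.  Comparing coefficients in the generating function gives
   P_n(x) = n! sum_k c_k x^(n-k)/(n-k)!: first for real x, where real power series have unique
   coefficients, then for all x since both sides are polynomials.  At x = 0 the symmetry
   P_n(a-x) = (-1)^n P_n(x) says f(t) e^(at) = f(-t).  Hence (e^(at)+1) f(t) = 2 f_even(t) and
   (e^(at)-1) f(t) = -2 f_odd(t).  If F is odd, f_even has coefficients a_k/k! and
   f(t) e^(xt) = f_even(t) * 2e^(xt)/(e^(at)+1), a product with the Euler generating function;
   if F is even, f_odd has coefficients a_k/k! and
   t f(t) e^(xt) = -(2/a) f_odd(t) * at e^(xt)/(e^(at)-1), a product with the Bernoulli one.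
   All of this is computed with coefficient sequences: products are Cauchy products and
   division by e^(at)+1 or (e^(at)-1)/t is cancellation of a factor with nonzero constant term. *)

Local Open Scope C_scope.

Lemma RtoC_neq_0 r : r <> 0%R -> RtoC r <> 0.
Proof. intros Hr H. apply RtoC_inj in H. exact (Hr H). Qed.

Lemma Cmult_cancel_r (x y z : C) : z <> 0 -> x * z = y * z -> x = y.
Proof.
  intros Hz H. replace x with (x * z / z) by (field; exact Hz).
  rewrite H. field. exact Hz.
Qed.

Lemma Cplus_cancel_l (s x y : C) : s + x = s + y -> x = y.
Proof. intros H. replace x with (s + x - s) by ring. rewrite H. ring. Qed.

Lemma fold_right_Cplus (l : list C) z : fold_right Cplus z l = fold_right Cplus 0 l + z.
Proof. induction l as [|w l IH]; simpl. - ring. - rewrite IH. ring. Qed.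

Lemma csum_lt_0 F : csum_lt 0 F = 0.
Proof. reflexivity. Qed.

Lemma csum_lt_S n F : csum_lt (S n) F = csum_lt n F + F n.
Proof.
  unfold csum_lt. rewrite seq_S, map_app, fold_right_app. simpl.
  rewrite fold_right_Cplus. ring.
Qed.

Lemma csum_lt_ext n F G : (forall k, (k < n)%nat -> F k = G k) -> csum_lt n F = csum_lt n G.
Proof.
  induction n as [|n IH]; intros H; [reflexivity|].
  rewrite !csum_lt_S, IH, H; auto.
Qed.

Lemma csum_lt_plus n F G : csum_lt n (fun k => F k + G k) = csum_lt n F + csum_lt n G.
Proof. induction n as [|n IH]; [rewrite !csum_lt_0; ring|]. rewrite !csum_lt_S, IH. ring. Qed.

Lemma csum_lt_minus n F G : csum_lt n (fun k => F k - G k) = csum_lt n F - csum_lt n G.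
Proof. induction n as [|n IH]; [rewrite !csum_lt_0; ring|]. rewrite !csum_lt_S, IH. ring. Qed.

Lemma csum_lt_scal n z F : csum_lt n (fun k => z * F k) = z * csum_lt n F.
Proof. induction n as [|n IH]; [rewrite !csum_lt_0; ring|]. rewrite !csum_lt_S, IH. ring. Qed.

Lemma csum_lt_zero n : csum_lt n (fun _ => 0) = 0.
Proof. induction n as [|n IH]; [reflexivity|]. rewrite csum_lt_S, IH. ring. Qed.

Lemma csum_lt_first n F : csum_lt (S n) F = F O + csum_lt n (fun k => F (S k)).
Proof.
  induction n as [|n IH]; [rewrite csum_lt_S, !csum_lt_0; ring|].
  rewrite csum_lt_S, IH, (csum_lt_S n). ring.
Qed.

Lemma csum_lt_rev n F : csum_lt n F = csum_lt n (fun k => F (n - 1 - k)%nat).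
Proof.
  induction n as [|n IH]; [reflexivity|].
  rewrite csum_lt_S, IH, csum_lt_first, Cplus_comm.
  replace (S n - 1 - 0)%nat with n by lia. f_equal.
  apply csum_lt_ext. intros k Hk. f_equal. lia.
Qed.

Lemma csum_lt_triangle n (G : nat -> nat -> C) :
  csum_lt (S n) (fun i => csum_lt (S i) (G i)) =
  csum_lt (S n) (fun k => csum_lt (S (n - k)) (fun j => G (k + j)%nat k)).
Proof.
  induction n as [|n IH]; [unfold csum_lt; simpl; ring|].
  rewrite csum_lt_S, IH, (csum_lt_S (S n) (G (S n))), (csum_lt_S (S n) (fun k => _)).
  replace (S n - S n)%nat with O by lia.
  rewrite (csum_lt_ext (S n) (fun k => csum_lt (S (S n - k)) _)
             (fun k => csum_lt (S (n - k)) (fun j => G (k + j)%nat k) + G (S n) k)).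
  - rewrite csum_lt_plus, (csum_lt_S 0), csum_lt_0, Nat.add_0_r. ring.
  - intros k Hk. replace (S n - k)%nat with (S (n - k)) by lia.
    rewrite (csum_lt_S (S (n - k))). do 2 f_equal. lia.
Qed.

Definition conv (u v : nat -> C) (n : nat) : C := csum_lt (S n) (fun k => u k * v (n - k)%nat).

Definition shift (v : nat -> C) (n : nat) : C := match n with O => 0 | S j => v j end.

Definition one_coef (n : nat) : C := match n with O => 1 | S _ => 0 end.

Lemma conv_ext u u' v v' n : (forall k, u k = u' k) -> (forall k, v k = v' k) ->
  conv u v n = conv u' v' n.
Proof. intros Hu Hv. apply csum_lt_ext. intros. rewrite Hu, Hv. reflexivity. Qed.

Lemma conv_comm u v n : conv u v n = conv v u n.
Proof.
  unfold conv. rewrite csum_lt_rev. apply csum_lt_ext. intros k Hk.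
  replace (S n - 1 - k)%nat with (n - k)%nat by lia.
  replace (n - (n - k))%nat with k by lia. ring.
Qed.

Lemma conv_plus_r u v w n : conv u (fun k => v k + w k) n = conv u v n + conv u w n.
Proof. unfold conv. rewrite <- csum_lt_plus. apply csum_lt_ext. intros. ring. Qed.

Lemma conv_scal_r z u v n : conv u (fun k => z * v k) n = z * conv u v n.
Proof. unfold conv. rewrite <- csum_lt_scal. apply csum_lt_ext. intros. ring. Qed.

Lemma conv_scal_l z u v n : conv (fun k => z * u k) v n = z * conv u v n.
Proof. rewrite conv_comm, conv_scal_r, conv_comm. reflexivity. Qed.

Lemma conv_assoc u v w n : conv (conv u v) w n = conv u (conv v w) n.
Proof.
  unfold conv.
  rewrite (csum_lt_ext (S n) _ (fun i => csum_lt (S i) (fun k => u k * v (i - k)%nat * w (n - i)%nat))).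
  2:{ intros i _. rewrite Cmult_comm, <- csum_lt_scal. apply csum_lt_ext. intros. ring. }
  rewrite csum_lt_triangle. apply csum_lt_ext. intros k Hk.
  rewrite <- csum_lt_scal. apply csum_lt_ext. intros j Hj.
  replace (k + j - k)%nat with j by lia. replace (n - (k + j))%nat with (n - k - j)%nat by lia. ring.
Qed.

Lemma conv_one_r u n : conv u one_coef n = u n.
Proof.
  unfold conv. rewrite csum_lt_S, Nat.sub_diag, (csum_lt_ext n _ (fun _ => 0)).
  - rewrite csum_lt_zero. simpl. ring.
  - intros k Hk. replace (n - k)%nat with (S (n - k - 1)) by lia. simpl. ring.
Qed.

Lemma conv_shift_r u v n : conv u (shift v) n = shift (conv u v) n.
Proof.
  unfold conv. destruct n as [|n].
  - unfold csum_lt. simpl. ring.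
  - rewrite csum_lt_S, Nat.sub_diag. simpl (shift v 0). rewrite Cmult_0_r, Cplus_0_r.
    apply csum_lt_ext. intros k Hk. replace (S n - k)%nat with (S (n - k)) by lia. reflexivity.
Qed.

Lemma conv_shift_l u v n : conv (shift u) v n = shift (conv u v) n.
Proof. rewrite conv_comm, conv_shift_r. destruct n; [reflexivity|]. apply conv_comm. Qed.

Lemma conv_cancel_l (u v w : nat -> C) : u O <> 0 ->
  (forall n, conv u v n = conv u w n) -> forall n, v n = w n.
Proof.
  intros Hu H n. induction n as [n IH] using lt_wf_ind.
  specialize (H n). rewrite !(conv_comm u) in H. unfold conv in H.
  rewrite !csum_lt_S, Nat.sub_diag, (csum_lt_ext n (fun k => v k * _) (fun k => w k * u (n - k)%nat)) in H
    by (intros k Hk; rewrite IH; auto).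
  apply (Cmult_cancel_r _ _ (u O)); auto.
  apply (Cplus_cancel_l (csum_lt n (fun k => w k * u (n - k)%nat))). exact H.
Qed.

Definition exp_coef (z : C) (m : nat) : C := cpow z m / cfact m.

Lemma INR_fact_neq_0 n : INR (fact n) <> 0%R.
Proof. apply not_0_INR, fact_neq_0. Qed.

Lemma cfact_neq_0 n : cfact n <> 0.
Proof. apply RtoC_neq_0, INR_fact_neq_0. Qed.

Lemma cfact_S m : cfact (S m) = INR (S m) * cfact m.
Proof. unfold cfact. rewrite <- RtoC_mult, <- mult_INR. reflexivity. Qed.

Lemma cbinom_fact n k : cbinom n k = cfact n / (cfact k * cfact (n - k)).
Proof.
  unfold cbinom, cfact, Binomial.C. rewrite RtoC_div, RtoC_mult; [reflexivity|].
  apply Rmult_integral_contrapositive; split; apply INR_fact_neq_0.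
Qed.

Lemma cpow_add z m k : cpow z (m + k) = cpow z m * cpow z k.
Proof. induction m as [|m IH]; simpl; [ring|]. rewrite IH. ring. Qed.

Lemma cpow_mult z w m : cpow (z * w) m = cpow z m * cpow w m.
Proof. induction m as [|m IH]; simpl; [ring|]. rewrite IH. ring. Qed.

Lemma exp_coef_0 z : exp_coef z 0 = 1.
Proof. unfold exp_coef, cfact. simpl. field. Qed.

Lemma exp_coef_1 z : exp_coef z 1 = z.
Proof. unfold exp_coef. rewrite cfact_S. unfold cfact. simpl. field. Qed.

Lemma exp_coef_at_0 m : exp_coef 0 m = one_coef m.
Proof. destruct m; [apply exp_coef_0|]. unfold exp_coef. simpl. field. apply cfact_neq_0. Qed.

Lemma exp_coef_S z m : exp_coef z (S m) * INR (S m) = z * exp_coef z m.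
Proof.
  unfold exp_coef. rewrite cfact_S. simpl cpow. field.
  split; [apply cfact_neq_0 | apply RtoC_neq_0, not_0_INR; lia].
Qed.

Lemma exp_coef_binom z m k : (k <= m)%nat ->
  exp_coef z k * exp_coef z (m - k) = exp_coef z m * cbinom m k.
Proof.
  intros Hk. unfold exp_coef. rewrite cbinom_fact.
  replace m with (k + (m - k))%nat at 1 3 by lia. rewrite cpow_add.
  replace (k + (m - k))%nat with m by lia.
  field. repeat split; apply cfact_neq_0.
Qed.

Lemma exp_coef_scale (a x : C) m : a <> 0 -> exp_coef a m * cpow (x / a) m = exp_coef x m.
Proof.
  intros Ha. unfold exp_coef.
  replace (cpow x m) with (cpow (a * (x / a)) m) by (f_equal; field; exact Ha).
  rewrite cpow_mult. field. apply cfact_neq_0.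
Qed.

Lemma csum_exp_coef_binom z N M (p : nat -> C) : (M <= N)%nat ->
  csum_lt M (fun k => exp_coef z k * p k * exp_coef z (N - k)) =
  exp_coef z N * csum_lt M (fun k => cbinom N k * p k).
Proof.
  intros HM. rewrite <- csum_lt_scal. apply csum_lt_ext. intros k Hk.
  rewrite <- Cmult_assoc, (Cmult_comm (p k)), Cmult_assoc, exp_coef_binom by lia. ring.
Qed.

Lemma strong_rec_S g n : strong_rec g (S n) = g (S n) (upto g n).
Proof. unfold strong_rec. cbn [upto]. rewrite (proj2 (Nat.leb_gt (S n) n)) by lia. reflexivity. Qed.

Lemma upto_strong_rec g n k : (k <= n)%nat -> upto g n k = strong_rec g k.
Proof.
  induction n as [|n IH]; intros Hk.
  - replace k with O by lia. reflexivity.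
  - simpl. destruct (Nat.leb k n) eqn:E.
    + apply IH, Nat.leb_le, E.
    + apply Nat.leb_gt in E. replace k with (S n) by lia. symmetry. apply strong_rec_S.
Qed.

Lemma strong_rec_unfold g n :
  (forall m b1 b2, (forall k, (k < m)%nat -> b1 k = b2 k) -> g m b1 = g m b2) ->
  strong_rec g n = g n (strong_rec g).
Proof.
  intros Hg. destruct n as [|n].
  - apply Hg. lia.
  - rewrite strong_rec_S. apply Hg. intros k Hk. apply upto_strong_rec. lia.
Qed.

Lemma euler_poly_unfold m y : euler_poly m y =
  cpow y m - / 2 * csum_lt m (fun k => cbinom m k * euler_poly k y).
Proof.
  unfold euler_poly at 1. rewrite strong_rec_unfold; [reflexivity|].
  intros k b1 b2 Hb. do 2 f_equal. apply csum_lt_ext. intros j Hj. rewrite Hb; auto.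
Qed.

Lemma bernoulli_poly_unfold m y : bernoulli_poly m y =
  cpow y m - / INR (S m) * csum_lt m (fun k => cbinom (S m) k * bernoulli_poly k y).
Proof.
  unfold bernoulli_poly at 1. rewrite strong_rec_unfold; [reflexivity|].
  intros k b1 b2 Hb. do 2 f_equal. apply csum_lt_ext. intros j Hj. rewrite Hb; auto.
Qed.

Lemma euler_poly_rec m y :
  csum_lt m (fun k => cbinom m k * euler_poly k y) = 2 * (cpow y m - euler_poly m y).
Proof. rewrite (euler_poly_unfold m y). field. Qed.

Lemma bernoulli_poly_rec m y :
  csum_lt m (fun k => cbinom (S m) k * bernoulli_poly k y) =
  INR (S m) * (cpow y m - bernoulli_poly m y).
Proof.
  rewrite (bernoulli_poly_unfold m y). field. apply RtoC_neq_0, not_0_INR. lia.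
Qed.

Definition euler_coef (a : R) (x : C) (m : nat) : C := exp_coef a m * euler_poly m (x / a).
Definition bernoulli_coef (a : R) (x : C) (m : nat) : C := exp_coef a m * bernoulli_poly m (x / a).

Lemma conv_exp_coef_last u z n :
  conv u (exp_coef z) n = csum_lt n (fun k => u k * exp_coef z (n - k)) + u n.
Proof. unfold conv. rewrite csum_lt_S, Nat.sub_diag, exp_coef_0. ring. Qed.

Section Generating_functions.
Variables (a : R) (x : C).
Hypothesis a_neq_0 : a <> 0%R.

(* [2 e^{xt} = (e^{at} + 1) * sum_m E_m(x/a) (at)^m / m!] *)
Lemma conv_euler_coef n :
  conv (euler_coef a x) (fun k => exp_coef a k + one_coef k) n = 2 * exp_coef x n.
Proof.
  rewrite conv_plus_r, conv_one_r, conv_exp_coef_last.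
  unfold euler_coef at 1.
  rewrite csum_exp_coef_binom, euler_poly_rec by lia.
  rewrite <- (exp_coef_scale a x n) by apply RtoC_neq_0, a_neq_0. unfold euler_coef. ring.
Qed.

(* [a t e^{xt} = (e^{at} - 1) * sum_m B_m(x/a) (at)^m / m!], divided by [t] *)
Lemma conv_bernoulli_coef n :
  conv (bernoulli_coef a x) (fun k => exp_coef a (S k)) n = a * exp_coef x n.
Proof.
  unfold conv. rewrite csum_lt_S, Nat.sub_diag, exp_coef_1.
  rewrite (csum_lt_ext n _ (fun k => exp_coef a k * bernoulli_poly k (x / a) * exp_coef a (S n - k))).
  2:{ intros k Hk. unfold bernoulli_coef. do 2 f_equal. lia. }
  rewrite csum_exp_coef_binom, bernoulli_poly_rec by lia.
  rewrite <- (exp_coef_scale a x n) by apply RtoC_neq_0, a_neq_0. unfold bernoulli_coef.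
  rewrite Cmult_assoc, exp_coef_S. ring.
Qed.
End Generating_functions.

Definition even_part (c : nat -> C) (k : nat) : C := if Nat.even k then c k else 0.
Definition odd_part (c : nat -> C) (k : nat) : C := if Nat.odd k then c k else 0.

Lemma cpow_minus_one k : cpow (RtoC (-1)) k = if Nat.even k then 1 else RtoC (-1).
Proof.
  induction k as [|k IH]; [reflexivity|].
  simpl cpow. rewrite IH, Nat.even_succ, <- Nat.negb_even.
  destruct (Nat.even k); simpl; rewrite <- ?RtoC_mult; f_equal; ring.
Qed.

Section Reflection.
Variables (a : R) (c : nat -> C) (x : C).
Hypothesis a_neq_0 : a <> 0%R.
(* coefficient form of [f(t) e^{at} = f(-t)] *)
Hypothesis reflection : forall n, conv c (exp_coef a) n = cpow (RtoC (-1)) n * c n.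

Lemma conv_reflection_plus n : conv c (fun k => exp_coef a k + one_coef k) n = 2 * even_part c n.
Proof.
  rewrite conv_plus_r, conv_one_r, reflection, cpow_minus_one. unfold even_part.
  destruct (Nat.even n); ring.
Qed.

Lemma conv_reflection_minus n :
  conv c (shift (fun k => exp_coef a (S k))) n = RtoC (-2) * odd_part c n.
Proof.
  assert (E : conv c (exp_coef a) n = conv c (shift (fun k => exp_coef a (S k))) n + c n).
  { rewrite <- (conv_one_r c n), <- conv_plus_r. apply conv_ext; [reflexivity|].
    intros [|k]; simpl; [rewrite exp_coef_0|]; ring. }
  apply (Cplus_cancel_l (c n)). rewrite Cplus_comm, <- E, reflection, cpow_minus_one.
  unfold odd_part. rewrite <- Nat.negb_even.
  destruct (Nat.even n); apply injective_projections; simpl; ring.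
Qed.

Lemma conv_even_part_euler n : conv (even_part c) (euler_coef a x) n = conv c (exp_coef x) n.
Proof.
  set (beta := fun k => exp_coef a k + one_coef k).
  revert n. apply (conv_cancel_l beta).
  { unfold beta. simpl. rewrite exp_coef_0, <- RtoC_plus. apply RtoC_neq_0. lra. }
  intros n. transitivity (2 * conv (even_part c) (exp_coef x) n).
  - rewrite conv_comm, conv_assoc, <- conv_scal_r.
    apply conv_ext; [reflexivity|]. apply conv_euler_coef, a_neq_0.
  - rewrite <- conv_assoc, <- conv_scal_l. apply conv_ext; [|reflexivity].
    intros k. rewrite conv_comm. symmetry. apply conv_reflection_plus.
Qed.

Lemma conv_odd_part_bernoulli n :
  conv c (exp_coef x) n = RtoC (-2) / a * conv (odd_part c) (bernoulli_coef a x) (S n).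
Proof.
  set (gamma := fun k => exp_coef a (S k)).
  set (W := conv (odd_part c) (bernoulli_coef a x)).
  set (Y := conv c (exp_coef x)).
  (* after multiplication by [gamma], both sides equal [-2 a (odd_part c * e^(xt))] *)
  assert (HW : forall m, RtoC (-2) * W m = a * shift Y m).
  { apply (conv_cancel_l gamma).
    { unfold gamma. rewrite exp_coef_1. apply RtoC_neq_0, a_neq_0. }
    intros m. rewrite !conv_scal_r.
    transitivity (RtoC (-2) * (a * conv (odd_part c) (exp_coef x) m)).
    - f_equal. rewrite conv_comm. unfold W. rewrite conv_assoc, <- conv_scal_r.
      apply conv_ext; [reflexivity|]. apply conv_bernoulli_coef, a_neq_0.
    - rewrite conv_shift_r, <- conv_shift_l. unfold Y. rewrite <- conv_assoc.
      rewrite (conv_ext (conv (shift gamma) c) (fun k => RtoC (-2) * odd_part c k) (exp_coef x) (exp_coef x)).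
      + rewrite conv_scal_l. ring.
      + intros k. rewrite conv_comm. apply conv_reflection_minus.
      + reflexivity. }
  specialize (HW (S n)). simpl shift in HW. fold W.
  transitivity (RtoC (-2) * W (S n) / a).
  - rewrite HW. field. apply RtoC_neq_0, a_neq_0.
  - field. apply RtoC_neq_0, a_neq_0.
Qed.
End Reflection.

Local Open Scope R_scope.

Lemma CV_radius_ge_of_ex_pseries (b : nat -> R) r : 0 <= r -> ex_pseries b r ->
  Rbar_le r (CV_radius b).
Proof.
  intros Hr [l Hl]. apply is_pseries_R in Hl.
  assert (H0 : Un_cv (fun n => b n * r ^ n) 0).
  { apply is_lim_seq_Reals, ex_series_lim_0. exists l. exact Hl. }
  destruct (maj_by_pos _ (exist _ 0 H0)) as [M [_ HM]].
  apply (proj1 (CV_radius_bounded b)). exists M. exact HM.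
Qed.

Lemma CV_radius_gt_of_ex_pseries (b : nat -> R) r :
  (forall s, Rabs s < r -> ex_pseries b s) ->
  forall s, Rabs s < r -> Rbar_lt (Rabs s) (CV_radius b).
Proof.
  intros H s Hs. pose proof (Rabs_pos s).
  apply Rbar_lt_le_trans with ((Rabs s + r) / 2); [simpl; lra|].
  apply CV_radius_ge_of_ex_pseries; [lra|].
  apply H. rewrite Rabs_pos_eq; lra.
Qed.

Lemma is_pseries_coef_unique (u v : nat -> R) (g : R -> R) r : 0 < r ->
  (forall s, Rabs s < r -> is_pseries u s (g s)) ->
  (forall s, Rabs s < r -> is_pseries v s (g s)) -> forall n, u n = v n.
Proof.
  intros Hr Hu Hv n.
  assert (Hrad : forall w, (forall s, Rabs s < r -> is_pseries w s (g s)) ->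
            Rbar_lt 0 (CV_radius w)).
  { intros w Hw. rewrite <- Rabs_R0.
    apply (CV_radius_gt_of_ex_pseries w r); [|rewrite Rabs_R0; exact Hr].
    intros s Hs. exists (g s). apply Hw, Hs. }
  apply (Rmult_eq_reg_r (INR (fact n))); [|apply INR_fact_neq_0].
  rewrite <- (Derive_n_coef u n), <- (Derive_n_coef v n) by auto.
  apply Derive_n_ext_loc. exists (mkposreal r Hr). intros s Hs.
  assert (Hs' : Rabs s < r).
  { unfold ball in Hs. simpl in Hs. unfold AbsRing_ball, abs, minus, plus, opp in Hs.
    simpl in Hs. rewrite Ropp_0, Rplus_0_r in Hs. exact Hs. }
  rewrite (is_pseries_unique _ _ _ (Hu s Hs')), (is_pseries_unique _ _ _ (Hv s Hs')).
  reflexivity.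
Qed.

Lemma is_pseries_exp_scaled (y s : R) :
  is_pseries (fun k => y ^ k / INR (fact k)) s (exp (y * s)).
Proof.
  pose proof (is_exp_Reals (y * s)) as H. apply is_pseries_R in H. apply is_pseries_R.
  eapply is_series_ext; [|exact H]. intros n. simpl.
  rewrite Rpow_mult_distr. field. apply INR_fact_neq_0.
Qed.

Lemma is_pseries_coef_mult_exp (b u : nat -> R) (g : R -> R) (y r : R) : 0 < r ->
  (forall s, Rabs s < r -> is_pseries b s (g s)) ->
  (forall s, Rabs s < r -> is_pseries u s (g s * exp (y * s))) ->
  forall n, u n = PS_mult b (fun k => y ^ k / INR (fact k)) n.
Proof.
  intros Hr Hb Hu. apply (is_pseries_coef_unique _ _ _ r Hr Hu).
  intros s Hs. apply is_pseries_mult; [apply Hb, Hs | apply is_pseries_exp_scaled | |].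
  - apply (CV_radius_gt_of_ex_pseries _ r); [|exact Hs].
    intros s' Hs'. exists (g s'). apply Hb, Hs'.
  - apply (CV_radius_gt_of_ex_pseries _ (Rabs s + 1)); [|lra].
    intros s' _. eexists. apply is_pseries_exp_scaled.
Qed.

Lemma is_series_finite (b : nat -> R) N : (forall k, (N < k)%nat -> b k = 0) ->
  is_series b (sum_f_R0 b N).
Proof.
  intros Hb. eapply filterlim_ext_loc; [|apply filterlim_const].
  exists N. intros n Hn. rewrite sum_n_Reals.
  induction Hn as [|n Hn IH]; [reflexivity|]. simpl. rewrite <- IH, Hb by lia. ring.
Qed.

Lemma real_poly_coef_zero (b : nat -> R) N :
  (forall y, sum_f_R0 (fun k => b k * y ^ k) N = 0) -> forall k, (k <= N)%nat -> b k = 0.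
Proof.
  intros Hb k Hk.
  set (b' := fun k => if (k <=? N)%nat then b k else 0).
  assert (Hb' : forall y, is_pseries b' y 0).
  { intros y. apply is_pseries_R. rewrite <- (Hb y).
    replace (sum_f_R0 (fun k => b k * y ^ k) N) with (sum_f_R0 (fun k => b' k * y ^ k) N).
    - apply is_series_finite. intros j Hj. unfold b'.
      rewrite (proj2 (Nat.leb_gt j N)) by lia. ring.
    - apply sum_eq. intros j Hj. unfold b'. rewrite (proj2 (Nat.leb_le j N)) by lia. reflexivity. }
  assert (H0 : forall y, is_pseries (fun _ => 0) y 0).
  { intros y. apply is_pseries_R.
    pose proof (is_series_finite (fun n => 0 * y ^ n) 0 (fun k _ => Rmult_0_l _)) as E.
    simpl in E. rewrite Rmult_0_l in E. exact E. }
  transitivity (b' k).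
  - unfold b'. rewrite (proj2 (Nat.leb_le k N)) by lia. reflexivity.
  - exact (is_pseries_coef_unique b' (fun _ => 0) (fun _ => 0) 1 Rlt_0_1
             (fun s _ => Hb' s) (fun s _ => H0 s) k).
Qed.

Lemma pow_n_RtoC (s : R) n : @pow_n C_Ring (RtoC s) n = RtoC (s ^ n).
Proof.
  induction n as [|n IH]; [reflexivity|]. simpl. rewrite IH.
  change (mult (RtoC s) (RtoC (s ^ n))) with (Cmult (RtoC s) (RtoC (s ^ n))).
  symmetry. apply RtoC_mult.
Qed.

Lemma cpow_pow_n z n : cpow z n = @pow_n C_Ring z n.
Proof. induction n as [|n IH]; [reflexivity|]. simpl. rewrite IH. reflexivity. Qed.

Lemma cpow_RtoC (s : R) n : cpow (RtoC s) n = RtoC (s ^ n).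
Proof. rewrite cpow_pow_n. apply pow_n_RtoC. Qed.

Lemma exp_coef_RtoC (y : R) m : exp_coef (RtoC y) m = RtoC (y ^ m / INR (fact m)).
Proof. unfold exp_coef, cfact. rewrite cpow_RtoC, RtoC_div; [reflexivity | apply INR_fact_neq_0]. Qed.

Lemma cexp_RtoC (y s : R) : cexp (Cmult (RtoC y) (RtoC s)) = RtoC (exp (y * s)).
Proof.
  unfold cexp, RtoC. simpl.
  replace (y * 0 + 0 * s)%R with 0%R by ring. replace (y * s - 0 * 0)%R with (y * s)%R by ring.
  rewrite cos_0, sin_0. f_equal; ring.
Qed.

(* Instantiated with [Re] and [Im]: coefficients can only be compared for real power series. *)
Section Real_linear_functional.
Variable pr : C -> R.
Hypothesis pr_plus : forall z w, pr (Cplus z w) = pr z + pr w.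
Hypothesis pr_scal : forall (r : R) z, pr (Cmult (RtoC r) z) = r * pr z.
Hypothesis pr_continuous : forall l, filterlim pr (locally l) (locally (pr l)).

Lemma pr_0 : pr (RtoC 0) = 0.
Proof. rewrite <- (Cmult_0_l (RtoC 0)), pr_scal. ring. Qed.

Lemma pr_sum_n (u : nat -> C) n : pr (sum_n u n) = sum_n (fun k => pr (u k)) n.
Proof.
  induction n as [|n IH]; [rewrite !sum_O; reflexivity|].
  rewrite !sum_Sn, <- IH. apply pr_plus.
Qed.

Lemma is_pseries_pr_real (u : nat -> C) (s : R) l : is_pseries u (RtoC s) l ->
  is_pseries (fun k => pr (u k)) s (pr l).
Proof.
  intros H. eapply filterlim_ext; [|exact (filterlim_comp _ _ _ _ _ _ _ _ H (pr_continuous l))].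
  intros n. simpl. rewrite pr_sum_n. apply sum_n_ext. intros k.
  rewrite pow_n_RtoC. apply pr_scal.
Qed.

Lemma pr_csum_lt n F : pr (csum_lt (S n) F) = sum_f_R0 (fun k => pr (F k)) n.
Proof.
  induction n as [|n IH].
  - rewrite csum_lt_S, csum_lt_0, pr_plus, pr_0. simpl. ring.
  - rewrite csum_lt_S, pr_plus, IH. reflexivity.
Qed.

Lemma pr_poly_coef_zero (e : nat -> C) N :
  (forall y : R, csum_lt (S N) (fun k => Cmult (e k) (cpow (RtoC y) k)) = RtoC 0) ->
  forall k, (k <= N)%nat -> pr (e k) = 0.
Proof.
  intros He. apply real_poly_coef_zero. intros y.
  rewrite <- pr_0, <- (He y), pr_csum_lt. apply sum_eq. intros k _.
  rewrite cpow_RtoC, Cmult_comm, pr_scal. ring.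
Qed.

Lemma is_pseries_pr_egf (u : nat -> C) (s : R) l :
  is_series (fun k => Cdiv (Cmult (u k) (cpow (RtoC s) k)) (cfact k)) l ->
  is_pseries (fun k => pr (u k) / INR (fact k)) s (pr l).
Proof.
  intros H.
  apply (is_series_ext _ (fun k => scal (pow_n (RtoC s) k) (Cmult (RtoC (/ INR (fact k))) (u k)))) in H.
  - eapply is_pseries_ext; [|exact (is_pseries_pr_real _ _ _ H)].
    intros k. simpl. rewrite pr_scal. unfold Rdiv. ring.
  - intros k. rewrite pow_n_RtoC, cpow_RtoC. unfold cfact.
    change (Cdiv (Cmult (u k) (RtoC (s ^ k))) (RtoC (INR (fact k))) =
            Cmult (RtoC (s ^ k)) (Cmult (RtoC (/ INR (fact k))) (u k))).
    rewrite RtoC_inv by apply INR_fact_neq_0. unfold Cdiv. ring.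
Qed.

Lemma pr_generating_coef (P : nat -> C -> C) (f : C -> C) (c : nat -> C) (y : R) n :
  taylor_series_at0 f c ->
  (exists rho, 0 < rho /\ forall t, Cmod t < rho ->
     is_series (fun n => Cdiv (Cmult (P n (RtoC y)) (cpow t n)) (cfact n))
               (Cmult (f t) (cexp (Cmult (RtoC y) t)))) ->
  pr (P n (RtoC y)) = pr (Cmult (cfact n) (conv c (exp_coef (RtoC y)) n)).
Proof.
  intros [r1 [Hr1 Htaylor]] [rho [Hrho Hgen]].
  set (r := Rmin r1 rho).
  assert (Hr : 0 < r) by (apply Rmin_pos; assumption).
  assert (Hf : forall s, Rabs s < r -> is_pseries (fun k => pr (c k)) s (pr (f (RtoC s)))).
  { intros s Hs. apply is_pseries_pr_real, Htaylor. rewrite Cmod_R.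
    eapply Rlt_le_trans; [exact Hs | apply Rmin_l]. }
  assert (HP : forall s, Rabs s < r ->
            is_pseries (fun k => pr (P k (RtoC y)) / INR (fact k)) s (pr (f (RtoC s)) * exp (y * s))).
  { intros s Hs. rewrite Rmult_comm, <- pr_scal, Cmult_comm, <- cexp_RtoC.
    apply is_pseries_pr_egf, Hgen. rewrite Cmod_R.
    eapply Rlt_le_trans; [exact Hs | apply Rmin_r]. }
  pose proof (is_pseries_coef_mult_exp _ _ _ y r Hr Hf HP n) as E.
  cbv beta in E. unfold cfact, conv. rewrite pr_scal, pr_csum_lt. unfold PS_mult in E.
  rewrite (sum_eq _ (fun k => pr (c k) * (y ^ (n - k) / INR (fact (n - k))))), <- E.
  - field. apply INR_fact_neq_0.
  - intros k _. rewrite exp_coef_RtoC, Cmult_comm, pr_scal. ring.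
Qed.
End Real_linear_functional.

Lemma Re_continuous (l : C) : filterlim Re (locally l) (locally (Re l)).
Proof. intros Q [eps H]. exists eps. intros z [Hz _]. apply H, Hz. Qed.

Lemma Im_continuous (l : C) : filterlim Im (locally l) (locally (Im l)).
Proof. intros Q [eps H]. exists eps. intros z [_ Hz]. apply H, Hz. Qed.

Lemma generating_coef_real (P : nat -> C -> C) (f : C -> C) (c : nat -> C) (y : R) n :
  taylor_series_at0 f c ->
  (exists rho, 0 < rho /\ forall t, Cmod t < rho ->
     is_series (fun n => Cdiv (Cmult (P n (RtoC y)) (cpow t n)) (cfact n))
               (Cmult (f t) (cexp (Cmult (RtoC y) t)))) ->
  P n (RtoC y) = Cmult (cfact n) (conv c (exp_coef (RtoC y)) n).
Proof.
  intros Htaylor Hgen. apply injective_projections.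
  - exact (pr_generating_coef Re re_plus re_scal_l Re_continuous P f c y n Htaylor Hgen).
  - exact (pr_generating_coef Im im_plus im_scal_l Im_continuous P f c y n Htaylor Hgen).
Qed.

Lemma poly_coef_zero (e : nat -> C) N :
  (forall y : R, csum_lt (S N) (fun k => Cmult (e k) (cpow (RtoC y) k)) = RtoC 0) ->
  forall k, (k <= N)%nat -> e k = RtoC 0.
Proof.
  intros He k Hk. apply injective_projections.
  - exact (pr_poly_coef_zero Re re_plus re_scal_l e N He k Hk).
  - exact (pr_poly_coef_zero Im im_plus im_scal_l e N He k Hk).
Qed.

Local Open Scope C_scope.

Definition truncate (d : nat) (e : nat -> C) (k : nat) : C := if (k <? d)%nat then e k else 0.

Lemma csum_lt_truncate d N e x : (d <= N)%nat ->
  csum_lt d (fun k => e k * cpow x k) = csum_lt N (fun k => truncate d e k * cpow x k).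
Proof.
  intros HN. replace N with (d + (N - d))%nat by lia. induction (N - d)%nat as [|m IH].
  - rewrite Nat.add_0_r. apply csum_lt_ext. intros k Hk. unfold truncate.
    rewrite (proj2 (Nat.ltb_lt k d) Hk). reflexivity.
  - rewrite Nat.add_succ_r, csum_lt_S, <- IH. unfold truncate.
    rewrite (proj2 (Nat.ltb_ge (d + m) d)) by lia. ring.
Qed.

Lemma is_poly_fun_eq_of_real (p q : C -> C) : is_poly_fun p -> is_poly_fun q ->
  (forall y : R, p (RtoC y) = q (RtoC y)) -> forall x, p x = q x.
Proof.
  intros [dp [cp Hp]] [dq [cq Hq]] Hpq.
  set (N := (dp + dq)%nat).
  set (e := fun k => truncate dp cp k - truncate dq cq k).
  assert (Hpx : forall x, p x = csum_lt (S N) (fun k => truncate dp cp k * cpow x k))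
    by (intros x; rewrite Hp; apply csum_lt_truncate; lia).
  assert (Hqx : forall x, q x = csum_lt (S N) (fun k => truncate dq cq k * cpow x k))
    by (intros x; rewrite Hq; apply csum_lt_truncate; lia).
  assert (Hdiff : forall x, p x - q x = csum_lt (S N) (fun k => e k * cpow x k)).
  { intros x. rewrite Hpx, Hqx, <- csum_lt_minus. apply csum_lt_ext. intros. unfold e. ring. }
  intros x. apply Ceq_minus. rewrite Hdiff, <- (csum_lt_zero (S N)).
  apply csum_lt_ext. intros k Hk. rewrite (poly_coef_zero e N); [ring| |lia].
  intros y. rewrite <- Hdiff, Hpq. ring.
Qed.

Lemma is_poly_fun_conv_exp_coef c n : is_poly_fun (fun x => cfact n * conv c (exp_coef x) n).
Proof.
  exists (S n), (fun j => cfact n * c (n - j)%nat / cfact j). intros x.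
  unfold conv. rewrite csum_lt_rev, <- csum_lt_scal. apply csum_lt_ext. intros j Hj.
  replace (S n - 1 - j)%nat with (n - j)%nat by lia. replace (n - (n - j))%nat with j by lia.
  unfold exp_coef. field. apply cfact_neq_0.
Qed.

Lemma generating_coef (P : nat -> C -> C) (f : C -> C) (c : nat -> C) n x :
  is_poly_fun (P n) -> taylor_series_at0 f c ->
  (forall x : C, exists rho, 0 < rho /\ forall t, Cmod t < rho ->
     is_series (fun n => Cdiv (Cmult (P n x) (cpow t n)) (cfact n)) (Cmult (f t) (cexp (Cmult x t)))) ->
  P n x = cfact n * conv c (exp_coef x) n.
Proof.
  intros Hpoly Htaylor Hgen. revert x.
  apply is_poly_fun_eq_of_real; [exact Hpoly | apply is_poly_fun_conv_exp_coef |].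
  intros y. apply (generating_coef_real P f); auto.
Qed.

Lemma reflection_coef (P : nat -> C -> C) (c : nat -> C) (a : R) :
  (forall n x, P n x = cfact n * conv c (exp_coef x) n) ->
  (forall n x, P n (RtoC a - x) = cpow (RtoC (-1)) n * P n x) ->
  forall n, conv c (exp_coef a) n = cpow (RtoC (-1)) n * c n.
Proof.
  intros HP Hsym n. specialize (Hsym n (RtoC 0)).
  replace (RtoC a - RtoC 0) with (RtoC a) in Hsym by ring.
  rewrite !HP, (conv_ext c c (exp_coef 0) one_coef), conv_one_r in Hsym
    by (reflexivity || apply exp_coef_at_0).
  apply (Cmult_cancel_r _ _ (cfact n)); [apply cfact_neq_0|].
  rewrite Cmult_comm, Hsym. ring.
Qed.

Lemma powerRZ_sub_nat (a : R) n k : (k <= n)%nat ->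
  powerRZ a (Z.of_nat n - Z.of_nat k) = (a ^ (n - k))%R.
Proof. intros Hk. rewrite <- Nat2Z.inj_sub, pow_powerRZ by exact Hk. reflexivity. Qed.

Lemma euler_sum_eq (a : R) (ak : nat -> R) (c : nat -> C) x n :
  ps_odd (fun k => c k - RtoC (ak k) / cfact k) ->
  cfact n * conv (even_part c) (euler_coef a x) n =
  csum_lt (S n) (fun k =>
    if Nat.even k then
      RtoC (ak k) * cbinom n k * RtoC (powerRZ a (Z.of_nat n - Z.of_nat k)) *
      euler_poly (n - k) (x / RtoC a)
    else 0).
Proof.
  intros Hodd. unfold conv. rewrite <- csum_lt_scal. apply csum_lt_ext. intros k Hk.
  unfold even_part. destruct (Nat.even k) eqn:Ek; [|ring].
  rewrite (proj2 (Ceq_minus _ _) (Hodd k Ek)), powerRZ_sub_nat, cbinom_fact by lia.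
  unfold euler_coef, exp_coef. rewrite cpow_RtoC. field. split; apply cfact_neq_0.
Qed.

Lemma powerRZ_sub_nat_S (a : R) n k : a <> 0%R -> (k <= n)%nat ->
  powerRZ a (Z.of_nat n - Z.of_nat (S k)) = (a ^ (n - k) / a)%R.
Proof.
  intros Ha Hk. replace (Z.of_nat n - Z.of_nat (S k))%Z with (Z.of_nat (n - k) + -1)%Z by lia.
  rewrite powerRZ_add, <- pow_powerRZ by exact Ha. simpl. field. exact Ha.
Qed.

Lemma bernoulli_sum_eq (a : R) (ak : nat -> R) (c : nat -> C) x n : a <> 0%R ->
  ps_even (fun k => c k - RtoC (ak k) / cfact k) ->
  cfact n * (RtoC (-2) / a * conv (odd_part c) (bernoulli_coef a x) (S n)) =
  RtoC (-2) * csum_lt (S (S n)) (fun k =>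
    if Nat.odd k then
      RtoC (ak k) / RtoC (INR k) * cbinom n (k - 1) *
      RtoC (powerRZ a (Z.of_nat n - Z.of_nat k)) * bernoulli_poly (n + 1 - k) (x / RtoC a)
    else 0).
Proof.
  intros Ha Heven. unfold conv.
  rewrite Cmult_assoc, <- !csum_lt_scal. apply csum_lt_ext. intros k Hk.
  unfold odd_part. destruct (Nat.odd k) eqn:Ok; [|ring].
  destruct k as [|k]; [discriminate|].
  replace (S k - 1)%nat with k by lia. replace (n + 1 - S k)%nat with (n - k)%nat by lia.
  replace (S n - S k)%nat with (n - k)%nat by lia.
  rewrite (proj2 (Ceq_minus _ _) (Heven _ Ok)), powerRZ_sub_nat_S, cbinom_fact, cfact_S by (exact Ha || lia).
  unfold bernoulli_coef, exp_coef. rewrite cpow_RtoC, RtoC_div by exact Ha.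
  field. repeat split; first [apply cfact_neq_0 | apply RtoC_neq_0; [exact Ha || (apply not_0_INR; lia)]].
Qed.

Local Close Scope C_scope.

Theorem mainTheorem4
  (a : R) (P : nat -> Complex.C -> Complex.C) (f : Complex.C -> Complex.C)
  (c : nat -> Complex.C) (ak : nat -> R) :
  a <> 0 ->
  (forall n, is_poly_fun (P n)) ->
  holomorphic_at0 f ->
  taylor_series_at0 f c ->
  f (RtoC 0) <> RtoC 0 ->
  (* generating function: sum_n P_n(x) t^n/n! = f(t) e^{xt} near t = 0 *)
  (forall x : Complex.C, exists rho : R, 0 < rho /\
     forall t : Complex.C, Cmod t < rho ->
       is_series (fun n => Cdiv (Cmult (P n x) (cpow t n)) (cfact n))
                 (Cmult (f t) (cexp (Cmult x t)))) ->
  (forall (n : nat) (x : Complex.C),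
     P n (Cminus (RtoC a) x) = Cmult (cpow (RtoC (-1)) n) (P n x)) ->
  (* F(t) = f(t) - sum_k a_k t^k/k!, with coefficients c_k - a_k/k! *)
  let Fc := fun k => Cminus (c k) (Cdiv (RtoC (ak k)) (cfact k)) in
  (ps_odd Fc ->
     forall (n : nat) (x : Complex.C),
       P n x = csum_lt (S n) (fun k =>
         if Nat.even k then
           Cmult (Cmult (Cmult (RtoC (ak k)) (cbinom n k))
                        (RtoC (powerRZ a (Z.of_nat n - Z.of_nat k))))
                 (euler_poly (n - k) (Cdiv x (RtoC a)))
         else RtoC 0)) /\
  (ps_even Fc ->
     forall (n : nat) (x : Complex.C),
       P n x = Cmult (RtoC (-2)) (csum_lt (S (S n)) (fun k =>
         if Nat.odd k then
           Cmult (Cmult (Cmult (Cdiv (RtoC (ak k)) (RtoC (INR k))) (cbinom n (k - 1)))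
                        (RtoC (powerRZ a (Z.of_nat n - Z.of_nat k))))
                 (bernoulli_poly (n + 1 - k) (Cdiv x (RtoC a)))
         else RtoC 0))).
Proof.
  intros Ha Hpoly _ Htaylor _ Hgen Hsym Fc.
  assert (HP : forall n x, P n x = Cmult (cfact n) (conv c (exp_coef x) n))
    by (intros n x; apply (generating_coef P f); auto).
  pose proof (reflection_coef P c a HP Hsym) as Hrefl.
  split.
  - intros Hodd n x. rewrite HP, <- (conv_even_part_euler a) by assumption.
    apply euler_sum_eq, Hodd.
  - intros Heven n x. rewrite HP, (conv_odd_part_bernoulli a) by assumption.
    apply bernoulli_sum_eq; assumption.
Qed.
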